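(* Let $Q\ge1$ and $\Omega_Q=\{(x,y)\in\mathbb R^2:\ x>0,\ y>0,\ xy\le Q\}$. Let $\mathcal B(x,y)=4Q^{1/2}(xy)^{1/2}-xy$ and, for $X_0\in\Omega_Q$, $\mathcal B_{X_0}(X)=\mathcal B(X)-\mathcal B'(X_0)(X-X_0)$, where $\mathcal B'(X_0)$ is the gradient of $\mathcal B$ at $X_0$. Then (1) $0\le\mathcal B(X)\le 4Q$ for all $X\in\Omega_Q$; (2) for all $X_0=(x_0,y_0)$, $X=(x,y)$ in $\Omega_Q$, $$\mathcal B_{X_0}(X_0)-\mathcal B_{X_0}(X)\ge c\,|x-x_0|\cdot|y-y_0|,$$ where $c$ is an absolute constant. *)

From Stdlib Require Import Reals Lra.
From Coquelicot Require Import Coquelicot.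
Open Scope R_scope.

Definition OmegaQ (Q x y : R) : Prop := 0 < x /\ 0 < y /\ x * y <= Q.

Definition Bell (Q x y : R) : R := 4 * sqrt Q * sqrt (x * y) - x * y.

Definition dBx (Q x0 y0 : R) : R := Derive (fun t => Bell Q t y0) x0.
Definition dBy (Q x0 y0 : R) : R := Derive (fun t => Bell Q x0 t) y0.

Definition BellX0 (Q x0 y0 x y : R) : R :=
  Bell Q x y - (dBx Q x0 y0 * (x - x0) + dBy Q x0 y0 * (y - y0)).

(** Write [s = sqrt Q], [u = sqrt (x y)] and [u0 = sqrt (x0 y0)].  Then
    [B = u (4 s - u)] and [4 Q - B = (2 s - u)^2], which gives the bounds.
    For the second part, the gradient of [B] at [X0] is
    [(k - 1) (y0, x0)] with [k = 2 s / u0 >= 2], and a direct computation gives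
    [B_X0(X0) - B_X0(X) = P + k D] with [P = (x - x0)(y - y0)] and
    [D = (sqrt (x y0) - sqrt (x0 y))^2 >= 0].  Moreover [P + D = (u - u0)^2 >= 0],
    so [P + k D >= |P|] whichever the sign of [P]; the constant is [c = 1]. *)
From Stdlib Require Import Reals Lra Psatz.
From Coquelicot Require Import Coquelicot.
Open Scope R_scope.

Lemma Bell_comm Q x y : Bell Q x y = Bell Q y x.
Proof. unfold Bell; now rewrite (Rmult_comm x y). Qed.

Lemma Bell_bounds Q x y : 0 <= x * y <= Q -> 0 <= Bell Q x y <= 4 * Q.
Proof.
  intros [Hxy0 HxyQ]; unfold Bell.
  assert (Hu : sqrt (x * y) <= sqrt Q) by now apply sqrt_le_1_alt.
  pose proof (sqrt_pos (x * y)); pose proof (sqrt_sqrt (x * y) Hxy0).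
  pose proof (sqrt_sqrt Q ltac:(lra)).
  pose proof (pow2_ge_0 (2 * sqrt Q - sqrt (x * y))).
  split; nra.
Qed.

Lemma dBx_eq Q x y : 0 < x -> 0 < y ->
  dBx Q x y = (2 * sqrt Q / sqrt (x * y) - 1) * y.
Proof.
  intros Hx Hy; unfold dBx, Bell.
  apply is_derive_unique; auto_derive.
  - nra.
  - field; apply Rgt_not_eq, sqrt_lt_R0; nra.
Qed.

Lemma dBy_eq Q x y : 0 < x -> 0 < y ->
  dBy Q x y = (2 * sqrt Q / sqrt (x * y) - 1) * x.
Proof.
  intros Hx Hy; unfold dBy.
  rewrite (Derive_ext _ (fun t => Bell Q t x)) by (intro; apply Bell_comm).
  fold (dBx Q y x); rewrite dBx_eq by assumption.
  now rewrite (Rmult_comm y x).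
Qed.

Lemma Rabs_le_add_scaled_sq P D k :
  0 <= D -> 0 <= P + D -> 2 <= k -> Rabs P <= P + k * D.
Proof.
  intros HD HPD Hk.
  destruct (Rle_dec 0 P).
  - rewrite Rabs_right by lra; nra.
  - rewrite Rabs_left by lra; nra.
Qed.

Lemma sqrt_cross_diff_sq x0 y0 x y : 0 <= x0 -> 0 <= y0 -> 0 <= x -> 0 <= y ->
  (sqrt (x * y0) - sqrt (x0 * y)) ^ 2 + (x - x0) * (y - y0)
  = (sqrt (x * y) - sqrt (x0 * y0)) ^ 2.
Proof.
  intros Hx0 Hy0 Hx Hy.
  assert (Hcross : sqrt (x * y0) * sqrt (x0 * y) = sqrt (x * y) * sqrt (x0 * y0)).
  { rewrite <- !sqrt_mult by nra; f_equal; ring. }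
  replace ((sqrt (x * y0) - sqrt (x0 * y)) ^ 2)
    with (sqrt (x * y0) * sqrt (x * y0) + sqrt (x0 * y) * sqrt (x0 * y)
          - 2 * (sqrt (x * y0) * sqrt (x0 * y))) by ring.
  replace ((sqrt (x * y) - sqrt (x0 * y0)) ^ 2)
    with (sqrt (x * y) * sqrt (x * y) + sqrt (x0 * y0) * sqrt (x0 * y0)
          - 2 * (sqrt (x * y) * sqrt (x0 * y0))) by ring.
  rewrite Hcross, !sqrt_sqrt by nra; ring.
Qed.

Lemma BellX0_gap_eq Q x0 y0 x y : 0 < x0 -> 0 < y0 -> 0 < x -> 0 < y ->
  BellX0 Q x0 y0 x0 y0 - BellX0 Q x0 y0 x y
  = (x - x0) * (y - y0)
    + 2 * sqrt Q / sqrt (x0 * y0) * (sqrt (x * y0) - sqrt (x0 * y)) ^ 2.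
Proof.
  intros Hx0 Hy0 Hx Hy.
  unfold BellX0, Bell; rewrite dBx_eq, dBy_eq by assumption.
  pose proof (sqrt_lt_R0 (x0 * y0) ltac:(nra)) as Hu0.
  set (k := 2 * sqrt Q / sqrt (x0 * y0)).
  assert (Hk : 4 * sqrt Q = 2 * k * sqrt (x0 * y0)) by (unfold k; field; lra).
  assert (Hk0 : 4 * sqrt Q * sqrt (x0 * y0) = 2 * k * (x0 * y0)).
  { rewrite Hk, Rmult_assoc, sqrt_sqrt by nra; ring. }
  rewrite Hk0, Hk.
  replace ((sqrt (x * y0) - sqrt (x0 * y)) ^ 2)
    with ((sqrt (x * y) - sqrt (x0 * y0)) ^ 2 - (x - x0) * (y - y0))
    by (rewrite <- sqrt_cross_diff_sq by lra; ring).
  replace ((sqrt (x * y) - sqrt (x0 * y0)) ^ 2)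
    with (sqrt (x * y) * sqrt (x * y) + sqrt (x0 * y0) * sqrt (x0 * y0)
          - 2 * sqrt (x * y) * sqrt (x0 * y0)) by ring.
  rewrite !sqrt_sqrt by nra; ring.
Qed.

Lemma BellX0_gap_ge Q x0 y0 x y : OmegaQ Q x0 y0 -> OmegaQ Q x y ->
  BellX0 Q x0 y0 x0 y0 - BellX0 Q x0 y0 x y >= Rabs (x - x0) * Rabs (y - y0).
Proof.
  intros (Hx0 & Hy0 & HQ0) (Hx & Hy & _).
  rewrite BellX0_gap_eq, <- Rabs_mult by assumption.
  apply Rle_ge, Rabs_le_add_scaled_sq.
  - apply pow2_ge_0.
  - rewrite Rplus_comm, sqrt_cross_diff_sq by lra; apply pow2_ge_0.
  - pose proof (sqrt_lt_R0 (x0 * y0) ltac:(nra)).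
    assert (sqrt (x0 * y0) <= sqrt Q) by now apply sqrt_le_1_alt.
    apply Rmult_le_reg_r with (sqrt (x0 * y0)); [assumption|].
    unfold Rdiv; rewrite Rmult_assoc, Rinv_l by lra; lra.
Qed.

Theorem lemma5p2 :
  (forall Q x y : R, 1 <= Q -> OmegaQ Q x y ->
     0 <= Bell Q x y <= 4 * Q) /\
  (exists c : R, 0 < c /\
     forall Q x0 y0 x y : R, 1 <= Q -> OmegaQ Q x0 y0 -> OmegaQ Q x y ->
       BellX0 Q x0 y0 x0 y0 - BellX0 Q x0 y0 x y >= c * Rabs (x - x0) * Rabs (y - y0)).
Proof.
  split.
  - intros Q x y _ (Hx & Hy & HxyQ).
    apply Bell_bounds; split; [nra | assumption].
  - exists 1; split; [lra |].
    intros Q x0 y0 x y _ H0 H.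
    rewrite Rmult_1_l; now apply BellX0_gap_ge.
Qed.
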